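(* For every $l$ and every arm $i$, the map $\Theta_l\ni\overline{\boldsymbol{\eta}}\mapsto\inf_{\overline{\boldsymbol{\eta}}'\in\Theta_{-l}}D(\boldsymbol{\eta}_i\|\boldsymbol{\eta}_i')$ is continuous.
   Context: $K$ arms; arm $i$ has observation density $f_i(x\mid\boldsymbol{\eta}_i)=h(x)\exp(\boldsymbol{\eta}_i^T\mathbf{T}(x)-\mathcal{A}_i(\boldsymbol{\eta}_i))$ with $\boldsymbol{\eta}_i$ in an open convex $\Psi_i\subset\mathbb{R}^d$, minimal representation, $\mathcal{A}_i$ strictly convex and $C^2$ with positive definite Hessian. $\boldsymbol{\kappa}_i=\nabla\mathcal{A}_i$; $D(\boldsymbol{\eta}_i\|\boldsymbol{\eta}_i')=(\boldsymbol{\eta}_i-\boldsymbol{\eta}_i')^T\boldsymbol{\kappa}_i(\boldsymbol{\eta}_i)-\mathcal{A}_i(\boldsymbol{\eta}_i)+\mathcal{A}_i(\boldsymbol{\eta}_i')$. $\overline{\boldsymbol{\eta}}=(\boldsymbol{\eta}_1,\dots,\boldsymbol{\eta}_K)$. Hypotheses: pairwise disjoint nonempty $\Theta_1,\dots,\Theta_M\subset\prod_i\Psi_i$ ($M\ge2$), each open relative to its affine hull; $\Theta_{-l}=\bigcup_{m\ne l}\Theta_m$. *)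

From HB Require Import structures.
From mathcomp Require Import all_boot all_order all_algebra.
From mathcomp Require Import all_classical all_reals all_analysis.
Set Implicit Arguments. Unset Strict Implicit. Unset Printing Implicit Defensive.
Import Order.TTheory GRing.Theory Num.Theory.
Import numFieldNormedType.Exports.
Local Open Scope classical_set_scope.
Local Open Scope ring_scope.

Section ExpFamDefs.
Variables (R : realType) (d : nat).

Definition dotv (u v : 'rV[R]_d) : R := \sum_(j < d) u 0 j * v 0 j.

Definition partial (j : 'I_d) (f : 'rV[R]_d -> R) (x : 'rV[R]_d) : R :=
  derive f x (delta_mx 0 j).

Definition grad (f : 'rV[R]_d -> R) (x : 'rV[R]_d) : 'rV[R]_d :=
  \row_j partial j f x.

Definition hessian (f : 'rV[R]_d -> R) (x : 'rV[R]_d) : 'M[R]_d :=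
  \matrix_(j, k) partial k (partial j f) x.

Definition convex_setv (S : set 'rV[R]_d) : Prop :=
  forall x y t, S x -> S y -> 0 <= t <= 1 -> S (t *: x + (1 - t) *: y).

Definition strictly_convex_on (S : set 'rV[R]_d) (f : 'rV[R]_d -> R) : Prop :=
  forall x y t, S x -> S y -> x != y -> 0 < t < 1 ->
    f (t *: x + (1 - t) *: y) < t * f x + (1 - t) * f y.

Definition C2_on (S : set 'rV[R]_d) (f : 'rV[R]_d -> R) : Prop :=
  [/\ forall x, S x -> differentiable f x,
      forall j x, S x -> differentiable (partial j f) x &
      forall j k x, S x -> {for x, continuous (partial k (partial j f))}].

Definition posdef_hessian_on (S : set 'rV[R]_d) (f : 'rV[R]_d -> R) : Prop :=
  forall x (v : 'rV[R]_d), S x -> v != 0 -> 0 < (v *m hessian f x *m v^T) 0 0.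

Definition bregD (A : 'rV[R]_d -> R) (eta eta' : 'rV[R]_d) : R :=
  dotv (eta - eta') (grad A eta) - A eta + A eta'.

End ExpFamDefs.

Section AffDefs.
Variables (R : realType) (m n : nat).

Definition aff_hull (S : set 'M[R]_(m, n)) : set 'M[R]_(m, n) :=
  [set y | exists (p : nat) (x : 'I_p -> 'M[R]_(m, n)) (lam : 'I_p -> R),
     [/\ forall k, S (x k), \sum_(k < p) lam k = 1 &
         y = \sum_(k < p) lam k *: x k]].

Definition rel_open_aff (S : set 'M[R]_(m, n)) : Prop :=
  exists U : set 'M[R]_(m, n), open U /\ S = U `&` aff_hull S.

End AffDefs.

(* Fix an arm i and write f := A_i, P := Psi_i and D(x||y) := bregD f x y,
   the Bregman divergence of the log-partition function.  The map of the
   theorem is the row projection e |-> eta_i composed with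
   F(x) := inf_{t in U} D(x || g t), for U the union of the other hypotheses
   and g t the i-th row of t; so it suffices to show F is continuous on P,
   for an arbitrary family g of points of P.  This rests on three facts.
   1. Convexity: D(x||y) >= 0 on P, with equality only for y = x.
   2. Coercivity: D(x0||.) has a positive minimum on a small sphere around
      x0 (compactness) and, by convexity, grows at least linearly beyond it;
      hence |y - x0| <= C (1 + D(x0||y)) on P.
   3. Relative perturbation: writing D(x||y) - D(x0||y) as
        f x0 - f x + <x - x0, grad f x> + <x0 - y, grad f x - grad f x0>
      and using 2, |D(x||y) - D(x0||y)| <= psi(x) (1 + D(x0||y)) uniformly in
      y, where psi is continuous with psi(x0) = 0 (f is C^2, so grad f is
      continuous).
   An abstract lemma, proved first, shows that the infimum of a nonnegative
   family is continuous under such uniform relative perturbations. *)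
From HB Require Import structures.
From mathcomp Require Import all_boot all_order all_algebra.
From mathcomp Require Import all_classical all_reals all_analysis.
From mathcomp Require Import ring lra.
Set Implicit Arguments. Unset Strict Implicit. Unset Printing Implicit Defensive.
Import Order.TTheory GRing.Theory Num.Theory.
Import numFieldNormedType.Exports.
Local Open Scope classical_set_scope.
Local Open Scope ring_scope.

(* No bound on h0 is
   needed: the relative error is absorbed near the infimum. *)
Section InfPerturbation.
Context (R : realType) (X T : Type) (F : set_system X) {FF : Filter F}.
Variables (h : X -> T -> R) (h0 : T -> R) (U : set T).
Hypotheses (U0 : U !=set0) (h0_ge0 : forall t, U t -> 0 <= h0 t).
Hypothesis h_near : forall delta, 0 < delta ->
  \forall x \near F, forall t, U t -> `|h x t - h0 t| <= delta * (1 + h0 t).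

Lemma inf_relative_perturbation_cvg :
  (fun x => inf [set h x t | t in U]) @ F --> inf [set h0 t | t in U].
Proof.
set m0 := inf [set h0 t | t in U].
have image_ne (k : T -> R) : [set k t | t in U] !=set0.
  by case: U0 => t Ut; exists (k t), t.
have h0_lb : lbound [set h0 t | t in U] 0 by move=> _ [t Ut <-]; exact: h0_ge0.
have m0_ge0 : 0 <= m0 by exact: lb_le_inf (image_ne h0) h0_lb.
apply/cvgrPdist_lt => eps eps0.
pose delta := eps / (2 * (m0 + 2 + eps)).
have delta_def : delta * (2 * (m0 + 2 + eps)) = eps by rewrite divfK //; lra.
have delta0 : 0 < delta by rewrite divr_gt0 //; lra.
have [_ [t1 Ut1 <-] t1_lt] : exists2 v, [set h0 t | t in U] v & v < m0 + eps / 2.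
  by apply: inf_adherent; [lra | split; [exact: image_ne | exists 0]].
have h0t1 := h0_ge0 Ut1.
near=> x.
have hx : forall t, U t -> `|h x t - h0 t| <= delta * (1 + h0 t).
  by near: x; exact: h_near.
have hx_lb : lbound [set h x t | t in U] (m0 - delta * (m0 + 1)).
  move=> _ [t Ut <-]; have := hx t Ut; rewrite ler_norml => /andP[lo _].
  have h0t : m0 <= h0 t by apply: ge_inf; [exists 0 | exists t].
  have := h0_ge0 Ut; nra.
have lo : m0 - delta * (m0 + 1) <= inf [set h x t | t in U].
  exact: lb_le_inf (image_ne _) hx_lb.
have up : inf [set h x t | t in U] <= h x t1.
  by apply: ge_inf; [exists (m0 - delta * (m0 + 1)) | exists t1].
have := hx t1 Ut1; rewrite ler_norml => /andP[_ hi].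
rewrite ltr_norml; apply/andP; split; nra.
Unshelve. all: by end_near.
Qed.
End InfPerturbation.

Section MatrixNorm.
Variables (R : realType) (m n : nat).
Implicit Types (x : 'M[R]_(m, n)).

Lemma mx_norm_entry_le x i j : `|x i j| <= `|x|.
Proof.
change (`|x i j| <= mx_norm x); rewrite mx_normrE.
by apply/bigmax_geP; right => /=; exists (i, j).
Qed.

Lemma mx_norm_le_entries x e : 0 <= e -> (forall i j, `|x i j| <= e) -> `|x| <= e.
Proof.
move=> e0 xe; change (mx_norm x <= e); rewrite mx_normrE.
by apply/bigmax_leP; split => // -[i j] _ /=; exact: xe.
Qed.

Lemma continuous_entrywise (T : topologicalType) (g : T -> 'M[R]_(m, n)) t :
  (forall i j, {for t, continuous (fun s => g s i j)}) -> {for t, continuous g}.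
Proof.
move=> g_cont; apply/cvgrPdist_lt => eps eps0.
have eps2 : 0 < eps / 2 by rewrite divr_gt0.
have : \forall s \near t, forall i j, `|g t i j - g s i j| < eps / 2.
  apply: filter_forall => i; apply: filter_forall => j.
  exact: (cvgrPdist_lt _ _).1 (g_cont i j) _ eps2.
apply: filterS => s entries_close.
apply: (@le_lt_trans _ _ (eps / 2)); last by lra.
apply: mx_norm_le_entries; first exact: ltW.
by move=> i j; rewrite !mxE; exact: ltW (entries_close i j).
Qed.

End MatrixNorm.

(* Extracting a row is 1-Lipschitz, hence continuous. *)
Lemma row_continuous (R : realType) (m n : nat) (i : 'I_m) :
  continuous (fun x : 'M[R]_(m, n) => row i x).
Proof.
move=> x; apply/(@cvgrPdist_lt _ _ _ (nbhs x) (nbhs_filter x)) => eps eps0.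
have near_x := (@cvgrPdist_lt _ _ _ (nbhs x) (nbhs_filter x) id x).1 cvg_id _ eps0.
apply: filterS near_x => z xz.
apply: le_lt_trans xz; apply: mx_norm_le_entries => // i' j.
by rewrite !mxE; have := @mx_norm_entry_le R m n (x - z) i j; rewrite !mxE.
Qed.

Section InnerProduct.
Variables (R : realType) (d : nat).
Implicit Types (u v w x : 'rV[R]_d).

Lemma dotv_le u v : `|dotv u v| <= d%:R * (`|u| * `|v|).
Proof.
rewrite /dotv; apply: le_trans (ler_norm_sum _ _ _) _.
apply: le_trans (_ : \sum_(j < d) (`|u| * `|v|) <= _).
  by apply: ler_sum => j _; rewrite normrM ler_pM // mx_norm_entry_le.
by rewrite sumr_const card_ord mulr_natl.
Qed.

Lemma dotvDl u v w : dotv (u + v) w = dotv u w + dotv v w.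
Proof. by rewrite /dotv -big_split; apply: eq_bigr => j _; rewrite mxE mulrDl. Qed.

Lemma dotvBr u v w : dotv u (v - w) = dotv u v - dotv u w.
Proof. by rewrite /dotv -sumrB; apply: eq_bigr => j _; rewrite !mxE mulrBr. Qed.

Lemma dotv_grad (f : 'rV[R]_d -> R) x v : differentiable f x ->
  dotv v (grad f x) = 'd f x v.
Proof.
move=> df; rewrite /dotv /grad {2}(row_sum_delta v) linear_sum.
by apply: eq_bigr => j _; rewrite mxE /partial deriveE // linearZ.
Qed.

Lemma grad_continuous (f : 'rV[R]_d -> R) x :
  (forall j, {for x, continuous (partial j f)}) -> {for x, continuous (grad f)}.
Proof.
move=> partial_cont; apply: continuous_entrywise => i j.
have -> : (fun s => grad f s i j) = partial j f by apply/funext => s; rewrite mxE.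
exact: partial_cont.
Qed.

Lemma bregD_tangent_gap (f : 'rV[R]_d -> R) x y : differentiable f x ->
  bregD f x y = f y - f x - 'd f x (y - x).
Proof. by move=> dfx; rewrite /bregD dotv_grad // -[x - y]opprB linearN /=; ring. Qed.

Lemma bregD_shift (f : 'rV[R]_d -> R) x0 x y :
  bregD f x y - bregD f x0 y = f x0 - f x + dotv (x - x0) (grad f x)
    + dotv (x0 - y) (grad f x - grad f x0).
Proof.
rewrite /bregD; have -> : x - y = (x - x0) + (x0 - y) by rewrite addrA subrK.
by rewrite dotvDl dotvBr; ring.
Qed.

End InnerProduct.

Section Convexity.
Variables (R : realType) (d : nat).
Implicit Types (x y : 'rV[R]_d).
Variables (P : set 'rV[R]_d) (f : 'rV[R]_d -> R).
Hypotheses (cP : convex_setv P) (sc : strictly_convex_on P f)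
  (df : forall x, P x -> differentiable f x).

Lemma convex_le x y t : P x -> P y -> 0 <= t <= 1 ->
  f (t *: x + (1 - t) *: y) <= t * f x + (1 - t) * f y.
Proof.
move=> Px Py /andP[t0 t1].
have [<-|xy] := eqVneq x y.
  by rewrite -scalerDl -mulrDl subrKC scale1r mul1r.
have [->|t0'] := eqVneq t 0.
  by rewrite scale0r add0r subr0 scale1r mul0r add0r mul1r.
have [->|t1'] := eqVneq t 1.
  by rewrite subrr scale0r addr0 scale1r mul0r addr0 mul1r.
by apply/ltW/sc => //; rewrite !lt_neqAle t0 t1 eq_sym t0' t1'.
Qed.

Lemma tangent_le x y : P x -> P y -> 'd f x (y - x) <= f y - f x.
Proof.
move=> Px Py; rewrite -deriveE; last exact: df.
have dv := @diff_derivable _ _ _ _ _ (y - x) (df Px).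
have slope_cvg : (fun h : R => h^-1 *: ((f \o shift x) (h *: (y - x)) - f x))
    @ 0^'+ --> 'D_(y - x) f x.
  move=> A /dv /nbhs_ballP [_ /posnumP[e] xe_A].
  by exists e%:num => //= u xe_u; rewrite lt_def => /andP [u0 _]; apply: xe_A.
apply: (cvgr_to_le slope_cvg); near=> h.
have h0 : 0 < h by near: h; exact: nbhs_right_gt.
have h1 : h < 1 by near: h; exact: nbhs_right_lt.
rewrite /= /shift; have -> : h *: (y - x) + x = h *: y + (1 - h) *: x.
  by rewrite scalerBr scalerBl scale1r addrA addrAC.
have := convex_le (t := h) Py Px (_ : 0 <= h <= 1); rewrite ltW // ltW // => /(_ isT) hc.
rewrite ler_pdivrMl //; nra.
Unshelve. all: by end_near.
Qed.

Lemma tangent_lt x y : P x -> P y -> x != y -> 'd f x (y - x) < f y - f x.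
Proof.
move=> Px Py xy.
pose mid := (1/2 : R) *: y + (1 - 1/2) *: x.
have Pmid : P mid by apply: cP => //; apply/andP; split; lra.
have mid_lt : f mid < 1/2 * f y + (1 - 1/2) * f x.
  by apply: sc => //; [rewrite eq_sym | apply/andP; split; lra].
have : 'd f x (mid - x) <= f mid - f x := tangent_le Px Pmid.
have -> : mid - x = (1/2 : R) *: (y - x).
  by rewrite /mid scalerBr scalerBl scale1r addrA addrAC addrK.
rewrite linearZ /= => tangent_mid.
have : 1/2 * 'd f x (y - x) <= f mid - f x by exact: tangent_mid.
lra.
Qed.

Lemma bregD_ge0 x y : P x -> P y -> 0 <= bregD f x y.
Proof.
move=> Px Py; rewrite bregD_tangent_gap; last exact: df.
by have := tangent_le Px Py; lra.
Qed.

Lemma bregD_gt0 x y : P x -> P y -> x != y -> 0 < bregD f x y.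
Proof.
move=> Px Py xy; rewrite bregD_tangent_gap; last exact: df.
by have := tangent_lt Px Py xy; lra.
Qed.

(* D(x0||.) is f plus an affine function, hence continuous on P. *)
Lemma bregD_continuous_right x0 w : P x0 -> P w -> {for w, continuous (bregD f x0)}.
Proof.
move=> Px0 Pw.
have -> : bregD f x0 = fun z => 'd f x0 (x0 - z) - f x0 + f z.
  by apply/funext => z; rewrite /bregD dotv_grad //; exact: df.
have affine_cont : {for w, continuous (fun z : 'rV[R]_d => 'd f x0 (x0 - z))}.
  have reflect_cont : {for w, continuous (fun z : 'rV[R]_d => x0 - z)}.
    by have := cvgB (cvg_cst _) cvg_id; exact.
  have diff_cont : continuous ('d f x0) := diff_continuous (df Px0).
  exact: continuous_comp reflect_cont (diff_cont (x0 - w)).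
exact: cvgD (cvgB affine_cont (cvg_cst _)) (differentiable_continuous (df Pw)).
Qed.

End Convexity.

Lemma sphere_compact (R : realType) (d : nat) (x0 : 'rV[R]_d) (r : R) :
  compact [set w | `|w - x0| = r].
Proof.
apply: bounded_closed_compact.
  rewrite /= /bounded_near; near=> B => w /= wr.
  apply: le_trans (_ : r + `|x0| <= B).
    by rewrite -wr; have := ler_normD (w - x0) x0; rewrite subrK.
  by near: B; apply: nbhs_pinfty_ge; rewrite num_real.
have dist_cont : continuous (fun w : 'rV[R]_d => `|w - x0|).
  by move=> w; exact: (cvg_norm (cvgB cvg_id (cvg_cst _))).
exact: (continuous_closedP _).1 dist_cont _ (@closed_eq _ r).
Unshelve. all: by end_near.
Qed.

Section Coercivity.
Variables (R : realType) (d : nat).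
Implicit Types (w y : 'rV[R]_d).
Variables (P : set 'rV[R]_d) (f : 'rV[R]_d -> R) (x0 : 'rV[R]_d).
Hypotheses (cP : convex_setv P) (sc : strictly_convex_on P f)
  (df : forall x, P x -> differentiable f x) (Px0 : P x0).

Lemma bregD_sphere_bound r : 0 < r -> (forall w, `|w - x0| = r -> P w) ->
  exists2 c, 0 < c & forall w, `|w - x0| = r -> c <= bregD f x0 w.
Proof.
move=> r0 sphere_P; pose S := [set w | `|w - x0| = r].
have [S0|S0] := pselect (S !=set0); last first.
  by exists 1 => // w Sw; exfalso; apply: S0; exists w.
have D_cont : {within S, continuous (bregD f x0)}.
  apply: continuous_in_subspaceT => w /[1!inE] Sw.
  by apply: (bregD_continuous_right df Px0); exact: sphere_P.
have [wm /set_mem Swm wm_min] := compact_EVT_min S0 (@sphere_compact _ _ x0 r) D_cont.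
exists (bregD f x0 wm); last by move=> w Sw; apply/wm_min/mem_set.
apply: (bregD_gt0 cP sc df Px0 (sphere_P _ Swm)).
apply: contraTneq r0 => x0_wm; move: Swm; rewrite /S /= -x0_wm subrr normr0 => <-.
by rewrite ltxx.
Qed.

(* By convexity of f along the segment [x0, y], D(x0||.) grows at least
   linearly outside a sphere on which it is bounded below by c. *)
Lemma bregD_linear_growth r c : 0 < r -> 0 < c ->
  (forall w, `|w - x0| = r -> c <= bregD f x0 w) ->
  forall y, P y -> c * `|y - x0| <= r * (bregD f x0 y + c).
Proof.
move=> r0 c0 sphere_c y Py.
have D_ge0 := bregD_ge0 sc df Px0 Py.
have [near_y|far_y] := leP `|y - x0| r; first nra.
set n := `|y - x0| in far_y *.
pose s := r / n.
have s0 : 0 < s by rewrite divr_gt0 //; lra.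
have s1 : s < 1 by rewrite ltr_pdivrMr ?mul1r //; lra.
have sn : s * n = r by rewrite divfK // gt_eqF //; lra.
pose w := s *: y + (1 - s) *: x0.
have wx : w - x0 = s *: (y - x0).
  by rewrite /w scalerBr scalerBl scale1r addrA addrAC addrK.
have w_sphere : `|w - x0| = r by rewrite wx normrZ gtr0_norm.
have Dw : bregD f x0 w <= s * bregD f x0 y.
  have dfx0 := df Px0; rewrite !bregD_tangent_gap // wx linearZ /=.
  have := convex_le sc (t := s) Py Px0; rewrite ltW // ltW // => /(_ isT).
  rewrite -/w; change (s *: 'd f x0 (y - x0)) with (s * 'd f x0 (y - x0)); nra.
have := sphere_c _ w_sphere; nra.
Qed.

Lemma bregD_coercive : open P ->
  exists2 C, 0 < C & forall y, P y -> `|y - x0| <= C * (1 + bregD f x0 y).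
Proof.
move=> oP.
have [e e0 ball_P] : exists2 e, 0 < e & ball x0 e `<=` P.
  by apply/nbhs_ballP/open_nbhs_nbhs; split.
pose r := e / 2; have r0 : 0 < r by rewrite divr_gt0.
have sphere_P w : `|w - x0| = r -> P w.
  by move=> wr; apply: ball_P; rewrite -ball_normE /ball_ /= distrC wr /r; lra.
have [c c0 sphere_c] := bregD_sphere_bound r0 sphere_P.
have rc0 : 0 < r / c by rewrite divr_gt0.
have crc : c * (r / c) = r by rewrite mulrC divfK // gt_eqF.
exists (r / c + r) => [|y Py]; first lra.
have growth := bregD_linear_growth r0 c0 sphere_c Py.
have D_ge0 := bregD_ge0 sc df Px0 Py.
apply: (@le_trans _ _ (r / c * bregD f x0 y + r)); last nra.
by rewrite -(ler_pM2l c0) mulrDr mulrA crc; nra.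
Qed.

End Coercivity.

Section RelativePerturbation.
Variables (R : realType) (d : nat) (P : set 'rV[R]_d) (f : 'rV[R]_d -> R).
Variables (x0 : 'rV[R]_d) (C : R).
Hypotheses (D_ge0 : forall y, P y -> 0 <= bregD f x0 y)
  (coercive : forall y, P y -> `|y - x0| <= C * (1 + bregD f x0 y))
  (f_cont : {for x0, continuous f}) (grad_cont : {for x0, continuous (grad f)}).

(* The modulus by which D(x||.) deviates from D(x0||.), relative to 1 + D(x0||.). *)
Let psi (x : 'rV[R]_d) : R := `|f x - f x0| + d%:R * (`|x - x0| * `|grad f x|)
  + d%:R * C * `|grad f x - grad f x0|.

Let psi_x0 : psi x0 = 0.
Proof. by rewrite /psi !subrr !normr0 !(mulr0, mul0r, addr0). Qed.

Let psi_continuous : {for x0, continuous psi}.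
Proof.
have dist_cont : {for x0, continuous (fun x : 'rV[R]_d => `|x - x0|)}.
  exact: cvg_norm (cvgB cvg_id (cvg_cst _)).
have f_term : {for x0, continuous (fun x : 'rV[R]_d => `|f x - f x0|)}.
  exact: cvg_norm (cvgB f_cont (cvg_cst _)).
have slope_term :
    {for x0, continuous (fun x : 'rV[R]_d => d%:R * (`|x - x0| * `|grad f x|))}.
  exact: cvgM (cvg_cst _) (cvgM dist_cont (cvg_norm grad_cont)).
have grad_term :
    {for x0, continuous (fun x : 'rV[R]_d => d%:R * C * `|grad f x - grad f x0|)}.
  exact: cvgM (cvg_cst _) (cvg_norm (cvgB grad_cont (cvg_cst _))).
exact: cvgD (cvgD f_term slope_term) grad_term.
Qed.

Lemma bregD_relative_perturbation delta : 0 < delta ->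
  \forall x \near x0, forall y, P y ->
    `|bregD f x y - bregD f x0 y| <= delta * (1 + bregD f x0 y).
Proof.
move=> delta0; near=> x => y Py.
have psi_small : psi x < delta.
  near: x; apply: filterS ((cvgrPdist_lt _ _).1 psi_continuous _ delta0) => x.
  by rewrite psi_x0 sub0r normrN; apply: le_lt_trans (ler_norm _).
set k := grad f x; set k0 := grad f x0.
have D0 := D_ge0 Py.
have slope_bound : `|dotv (x - x0) k| <= d%:R * (`|x - x0| * `|k|) := dotv_le _ _.
have shift_bound :
    `|dotv (x0 - y) (k - k0)| <= d%:R * (C * (1 + bregD f x0 y) * `|k - k0|).
  apply: le_trans (dotv_le _ _) _; apply: ler_wpM2l => //.
  by apply: ler_wpM2r => //; rewrite distrC; exact: coercive.
have nonneg_terms : 0 <= `|f x - f x0| /\ 0 <= d%:R * (`|x - x0| * `|k|).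
  by split; [exact: normr_ge0 | apply: mulr_ge0 => //; exact: mulr_ge0].
have triangle : `|f x0 - f x + dotv (x - x0) k + dotv (x0 - y) (k - k0)|
    <= `|f x - f x0| + `|dotv (x - x0) k| + `|dotv (x0 - y) (k - k0)|.
  rewrite (distrC (f x)); apply: le_trans (ler_normD _ _) _.
  by rewrite lerD2r; exact: ler_normD.
rewrite bregD_shift -/k -/k0; apply: le_trans triangle _.
apply: (@le_trans _ _ (psi x * (1 + bregD f x0 y))); first by rewrite /psi -/k -/k0; nra.
by apply: ler_wpM2r; [lra | exact: ltW].
Unshelve. all: by end_near.
Qed.

End RelativePerturbation.

Lemma bregD_inf_continuous (R : realType) (d : nat) (P : set 'rV[R]_d)
    (f : 'rV[R]_d -> R) (T : Type) (g : T -> 'rV[R]_d) (U : set T) x0 :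
  open P -> convex_setv P -> strictly_convex_on P f -> C2_on P f ->
  U !=set0 -> (forall t, U t -> P (g t)) -> P x0 ->
  {for x0, continuous (fun x => inf [set bregD f x (g t) | t in U])}.
Proof.
move=> oP cP sc [df dpartial _] U0 gP Px0.
have [C _ coercive] := bregD_coercive cP sc df Px0 oP.
have grad_cont : {for x0, continuous (grad f)}.
  by apply: grad_continuous => j; exact: differentiable_continuous (dpartial j _ Px0).
apply: (@inf_relative_perturbation_cvg _ _ _ _ (nbhs_filter x0)
  (fun x t => bregD f x (g t))) => //.
  by move=> t Ut; exact: (bregD_ge0 sc df Px0 (gP t Ut)).
move=> delta delta0.
have := bregD_relative_perturbation (fun y => bregD_ge0 sc df Px0 (y := y)) coercive
  (differentiable_continuous (df _ Px0)) grad_cont delta0.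
by apply: filterS => x near_x t Ut; exact: near_x (gP t Ut).
Qed.

Lemma exists_other_index (M : nat) (l : 'I_M) : (1 < M)%N -> exists m : 'I_M, m != l.
Proof.
move=> M_gt1; pose m0 : 'I_M := Ordinal (ltnW M_gt1); pose m1 : 'I_M := Ordinal M_gt1.
have [l_m0|] := eqVneq l m0; last by exists m0; rewrite eq_sym.
by exists m1; rewrite l_m0 -val_eqE.
Qed.

(* etabar : 'M[R]_(K, d) -- row i is the natural parameter eta_i of arm i *)
Theorem lemma6 (R : realType) (K d M : nat)
  (Psi : 'I_K -> set 'rV[R]_d) (A : 'I_K -> 'rV[R]_d -> R)
  (Theta : 'I_M -> set 'M[R]_(K, d)) :
  (1 < M)%N ->
  (forall i, open (Psi i)) ->
  (forall i, convex_setv (Psi i)) ->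
  (forall i, strictly_convex_on (Psi i) (A i)) ->
  (forall i, C2_on (Psi i) (A i)) ->
  (forall i, posdef_hessian_on (Psi i) (A i)) ->
  (forall m, Theta m !=set0) ->
  (forall m e i, Theta m e -> Psi i (row i e)) ->
  (forall m m', m != m' -> Theta m `&` Theta m' = set0) ->
  (forall m, rel_open_aff (Theta m)) ->
  forall (l : 'I_M) (i : 'I_K),
    {within Theta l, continuous (fun e : 'M[R]_(K, d) =>
       inf [set bregD (A i) (row i e) (row i e') | e' in
              \bigcup_(m in [set m | m != l]) Theta m])}.
Proof.
move=> M_gt1 Psi_open Psi_convex A_sconvex A_C2 _ Theta_ne Theta_Psi _ _ l i.
apply: continuous_in_subspaceT => e /[1!inE] Theta_e.
set U := \bigcup_(m in [set m | m != l]) Theta m.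
have U_ne : U !=set0.
  have [m ml] := exists_other_index l M_gt1.
  by have [e' Theta_e'] := Theta_ne m; exists e', m.
have U_Psi e' : U e' -> Psi i (row i e') by case=> m _; exact: Theta_Psi.
have inf_cont := bregD_inf_continuous (Psi_open i) (Psi_convex i) (A_sconvex i)
  (A_C2 i) U_ne U_Psi (Theta_Psi _ _ i Theta_e).
exact: (continuous_comp (@row_continuous R K d i e) inf_cont).
Qed.
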